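(* Let $G$ be a finite group with $c(G)$ conjugacy classes. Then \[ Spec_4(G)=\left\{1,\ \frac{c(G)}{|G|},\ Pr^4(G)\right\}. \]
   Context: For $\pi\in S_n$ in one-line notation $\langle\pi_1\dots\pi_n\rangle$, $Pr_\pi(G)$ is the probability that $a_1\cdots a_n=a_{\pi_1}\cdots a_{\pi_n}$ for independent uniformly random $a_1,\dots,a_n\in G$. $Spec_n(G)=\{Pr_\pi(G):\pi\in S_n\}$. $Pr^4(G)=Pr_{\langle4\;3\;2\;1\rangle}(G)$ is the probability that $a_1a_2a_3a_4=a_4a_3a_2a_1$. *)

From HB Require Import structures.
From mathcomp Require Import all_boot all_order all_algebra all_fingroup.
Set Implicit Arguments. Unset Strict Implicit. Unset Printing Implicit Defensive.
Import GRing.Theory.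

(* Pr_pi(G): probability that a_1...a_n = a_{pi 1}...a_{pi n} for a uniformly
   random tuple a : 'I_n -> gT (indices shifted to 0..n-1). *)
Definition prodEq (gT : finGroupType) (n : nat) (pi : 'S_n)
  (a : {ffun 'I_n -> gT}) : bool :=
  ((\prod_(i < n) a i)%g == (\prod_(i < n) a (pi i))%g).

Definition Pr (gT : finGroupType) (n : nat) (pi : 'S_n) : rat :=
  (#|[set a : {ffun 'I_n -> gT} | prodEq pi a]|%:R / (#|gT| ^ n)%:R)%R.

Definition Spec (gT : finGroupType) (n : nat) (q : rat) : Prop :=
  exists pi : 'S_n, Pr gT pi = q.

(* The permutation <4 3 2 1>, i.e. i |-> 3 - i on 'I_4. *)
Definition rev4 : 'S_4 := perm (@rev_ord_inj 4).

Definition Pr4 (gT : finGroupType) : rat := Pr gT rev4.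

Definition commProb (gT : finGroupType) : rat :=
  (#|classes [set: gT]|%:R / #|gT|%:R)%R.

From mathcomp Require Import all_boot all_order all_algebra all_fingroup.
Import GRing.Theory Num.Theory.
Set Implicit Arguments. Unset Strict Implicit. Unset Printing Implicit Defensive.

(* Pr_pi(G) |G|^4 counts the solutions of a_1 a_2 a_3 a_4 = a_pi(1) .. a_pi(4), and
   this count is unchanged by any invertible substitution of the variables carrying
   one relator to a conjugate of the other.  Relabelling the variables shows that
   pi and pi^-1 give the same count; inverting every variable and reading both words
   backwards shows that pi and <4 3 2 1> pi <4 3 2 1> do.  Ten explicit substitutions
   then identify each of the 24 counts with that of the identity (all of G^4), of a
   transposition (|G|^2 times the number of commuting pairs, which is c(G) |G| by
   Burnside's lemma) or of <4 3 2 1>. *)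

Section Words.
Variables (gT : finGroupType) (I : finType).
Local Open Scope group_scope.

Definition word (a : {ffun I -> gT}) (s : seq I) : gT := \prod_(i <- s) a i.

Definition relator (u v : seq I) (a : {ffun I -> gT}) : gT :=
  word a u * (word a v)^-1.

Definition sols (u v : seq I) : nat :=
  #|[set a : {ffun I -> gT} | word a u == word a v]|.

Lemma sols_subst u v u' v' (h h' : {ffun I -> gT} -> {ffun I -> gT})
    (g : {ffun I -> gT} -> gT) :
  cancel h h' -> cancel h' h ->
  (forall a, relator u v (h a) = (g a)^-1 * relator u' v' a * g a) ->
  sols u v = sols u' v'.
Proof.
move=> hK h'K hW; rewrite /sols -[in RHS](card_imset _ (can_inj hK)).
apply: eq_card => x; rewrite -[x in RHS]h'K mem_imset; last exact: can_inj hK.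
rewrite -[x in LHS]h'K !inE eq_mulgV1 [RHS]eq_mulgV1.
by rewrite -/(relator _ _ _) -/(relator _ _ _) hW -mulgA -conjgE conjg_eq1.
Qed.

Lemma solsC u v : sols u v = sols v u.
Proof. by apply: eq_card => a; rewrite !inE eq_sym. Qed.

Lemma word_map (f : I -> I) (a : {ffun I -> gT}) s :
  word a (map f s) = word [ffun i => a (f i)] s.
Proof. by rewrite /word big_map; apply: eq_bigr => i _; rewrite ffunE. Qed.

Lemma word_rev_inv (a : {ffun I -> gT}) s :
  word [ffun i => (a i)^-1] (rev s) = (word a s)^-1.
Proof.
elim: s => [|i s IHs]; first by rewrite /word !big_nil invg1.
by rewrite rev_cons /word big_rcons big_cons -/(word _ _) IHs ffunE invMg.
Qed.

Lemma sols_relabel (s : {perm I}) u v : sols (map s u) (map s v) = sols u v.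
Proof.
apply: (sols_subst (h := fun a => [ffun i => a (s^-1 i)])
  (h' := fun a => [ffun i => a (s i)]) (g := fun=> 1)) => [a|a|a].
- by apply/ffunP => i; rewrite !ffunE permK.
- by apply/ffunP => i; rewrite !ffunE permKV.
rewrite /relator !word_map invg1 mul1g mulg1; congr (_ * _^-1);
  by congr word; apply/ffunP => i; rewrite !ffunE permK.
Qed.

Lemma sols_rev u v : sols (rev u) (rev v) = sols u v.
Proof.
rewrite [RHS]solsC; apply: (sols_subst (h := fun a => [ffun i => (a i)^-1])
  (h' := fun a => [ffun i => (a i)^-1]) (g := word^~ u)) => [a|a|a].
- by apply/ffunP => i; rewrite !ffunE invgK.
- by apply/ffunP => i; rewrite !ffunE invgK.
by rewrite /relator !word_rev_inv invgK !mulgA mulgKV.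
Qed.

End Words.

Lemma card_commuting_pairs (gT : finGroupType) :
  #|[set p : gT * gT | (p.1 * p.2 == p.2 * p.1)%g]| = (#|classes [set: gT]| * #|gT|)%N.
Proof.
have actsJ : [acts [set: gT], on [set: gT] | 'J] by apply/actsP => x _ y; rewrite !inE.
move: (Frobenius_Cauchy actsJ); rewrite cardsT => <-; rewrite -sum1_card.
rewrite (eq_bigl (fun p : gT * gT => predT p.1 && (p.1 * p.2 == p.2 * p.1)%g));
  last by move=> p; rewrite !inE.
rewrite -(pair_big_dep predT (fun x y => x * y == y * x)%g (fun _ _ => 1%N)).
apply: eq_big => [x|x _]; first by rewrite /= !inE.
rewrite sum1_card; apply: eq_card => y; rewrite in_setI in_setT /= unfold_in /=.
apply/idP/afix1P => /= [/eqP xy|yx]; first by rewrite conjgE -xy mulKg.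
by apply/eqP; rewrite (conjgC y x) yx.
Qed.

Lemma Pr_perm1 (gT : finGroupType) (n : nat) : Pr gT (1 : 'S_n) = 1%R.
Proof.
rewrite /Pr (_ : [set a | _] = setT); last first.
  by apply/setP => a; rewrite !inE /prodEq; apply/eqP/eq_bigr => i _; rewrite perm1.
rewrite cardsT card_ffun card_ord divff // pnatr_eq0 -lt0n expn_gt0.
by apply/orP; left; apply/card_gt0P; exists 1%g.
Qed.

Section FourLetters.
Variable gT : finGroupType.
Local Open Scope group_scope.

Definition o0 : 'I_4 := @Ordinal 4 0 isT.
Definition o1 : 'I_4 := @Ordinal 4 1 isT.
Definition o2 : 'I_4 := @Ordinal 4 2 isT.
Definition o3 : 'I_4 := @Ordinal 4 3 isT.

Lemma ord4P (i : 'I_4) : [\/ i = o0, i = o1, i = o2 | i = o3].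
Proof.
by case: i => [[|[|[|[|//]]]] ?]; [constructor 1|constructor 2|constructor 3|constructor 4];
  apply: val_inj.
Qed.

Definition mk4 (x0 x1 x2 x3 : gT) : {ffun 'I_4 -> gT} :=
  [ffun i : 'I_4 => nth x0 [:: x0; x1; x2; x3] i].

Lemma ffun4P (a b : {ffun 'I_4 -> gT}) :
  a o0 = b o0 -> a o1 = b o1 -> a o2 = b o2 -> a o3 = b o3 -> a = b.
Proof. by move=> *; apply/ffunP => i; case: (ord4P i) => ->. Qed.

Definition sols4 (i j k l : 'I_4) : nat := sols gT [:: o0; o1; o2; o3] [:: i; j; k; l].

Lemma prod_ord4 (F : 'I_4 -> gT) : \prod_(i < 4) F i = F o0 * (F o1 * (F o2 * F o3)).
Proof.
rewrite !big_ord_recl big_ord0 mulg1.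
by congr (F _ * (F _ * (F _ * F _))); apply: val_inj.
Qed.

Lemma Pr_sols4 (pi : 'S_4) :
  Pr gT pi = ((sols4 (pi o0) (pi o1) (pi o2) (pi o3))%:R / (#|gT| ^ 4)%:R)%R.
Proof.
congr (_%:R / _)%R; apply: eq_card => a.
by rewrite !inE /prodEq /word !prod_ord4 !big_cons big_nil !mulg1.
Qed.

Lemma sols4_inv (pi : 'S_4) :
  sols4 (pi o0) (pi o1) (pi o2) (pi o3) = sols4 (pi^-1 o0) (pi^-1 o1) (pi^-1 o2) (pi^-1 o3).
Proof. by rewrite /sols4 -[RHS](sols_relabel _ pi) /= !permKV solsC. Qed.

Lemma rev4E : [/\ rev4 o0 = o3, rev4 o1 = o2, rev4 o2 = o1 & rev4 o3 = o0].
Proof. by split; rewrite permE; apply: val_inj. Qed.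

Lemma sols4_rev i j k l : sols4 i j k l = sols4 (rev4 l) (rev4 k) (rev4 j) (rev4 i).
Proof.
case: rev4E => r0 r1 r2 r3.
by rewrite /sols4 -sols_rev -(sols_relabel _ rev4) /= r0 r1 r2 r3.
Qed.

Lemma sols4_id : sols4 o0 o1 o2 o3 = (#|gT| ^ 4)%N.
Proof.
rewrite /sols4 /sols (_ : [set a | _] = setT); last by apply/setP => a; rewrite !inE eqxx.
by rewrite cardsT card_ffun card_ord.
Qed.

Lemma sols4_swap : sols4 o1 o0 o2 o3 = (#|classes [set: gT]| * #|gT| ^ 3)%N.
Proof.
pose split4 (a : {ffun 'I_4 -> gT}) := ((a o0, a o1), (a o2, a o3)).
have split4_inj : injective split4 by move=> a b [? ? ? ?]; apply: ffun4P.
have cancel23 (x y z w : gT) : (x * z * w == y * z * w) = (x == y).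
  by rewrite (inj_eq (mulIg _)) (inj_eq (mulIg _)).
rewrite /sols4 /sols -(card_imset _ split4_inj).
rewrite (_ : [set split4 a | a in _] =
             setX [set p : gT * gT | p.1 * p.2 == p.2 * p.1] setT).
  by rewrite cardsX cardsT card_prod card_commuting_pairs -mulnA mulnn -expnS.
apply/setP => -[[x0 x1] [x2 x3]]; rewrite !inE /=.
apply/imsetP/idP => [[a + [-> -> _ _]]|/andP[xx _]].
  by rewrite inE /word !big_cons big_nil !mulg1 !mulgA cancel23 andbT.
exists (mk4 x0 x1 x2 x3); last by rewrite /split4 !ffunE.
by rewrite inE /word !big_cons big_nil !ffunE /= !mulg1 !mulgA cancel23.
Qed.

Ltac group_norm := rewrite ?invMg ?invgK ?mulgA;
  repeat progress
    rewrite ?mulgK ?mulgVK ?mulgV ?mulVg ?mul1g ?mulg1 ?invg1 ?invMg ?invgK ?mulgA.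

Ltac sols4_by_subst h h' g :=
  apply: (sols_subst (h := fun a => h (a o0) (a o1) (a o2) (a o3))
    (h' := fun a => h' (a o0) (a o1) (a o2) (a o3))
    (g := fun a => g (a o0) (a o1) (a o2) (a o3))) => a;
  [apply: ffun4P | apply: ffun4P | rewrite /relator /word !big_cons !big_nil];
  by rewrite !ffunE /=; group_norm.

Lemma sols4_0213 : sols4 o0 o2 o1 o3 = sols4 o1 o0 o2 o3.
Proof.
sols4_by_subst (fun x0 x1 x2 x3 : gT => mk4 x2 x0 x1 x3)
  (fun x0 x1 x2 x3 : gT => mk4 x1 x2 x0 x3) (fun x0 x1 x2 x3 : gT => x2^-1).
Qed.

Lemma sols4_1032 : sols4 o1 o0 o3 o2 = sols4 o3 o2 o1 o0.
Proof.
sols4_by_subst (fun x0 x1 x2 x3 : gT => mk4 (x0 * x2^-1 * x3^-1) (x0 * x1) x2 x3)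
  (fun x0 x1 x2 x3 : gT => mk4 (x0 * x3 * x2) (x2^-1 * x3^-1 * x0^-1 * x1) x2 x3)
  (fun x0 x1 x2 x3 : gT => x0 * x1 * x2 * x3 * x0^-1 * x1^-1 * x0^-1).
Qed.

Lemma sols4_1203 : sols4 o1 o2 o0 o3 = sols4 o1 o0 o2 o3.
Proof.
sols4_by_subst (fun x0 x1 x2 x3 : gT => mk4 x0 (x1 * x2^-1) x2 x3)
  (fun x0 x1 x2 x3 : gT => mk4 x0 (x1 * x2) x2 x3) (fun _ _ _ _ : gT => 1 : gT).
Qed.

Lemma sols4_1230 : sols4 o1 o2 o3 o0 = sols4 o1 o0 o2 o3.
Proof.
sols4_by_subst (fun x0 x1 x2 x3 : gT => mk4 x0 (x1 * x3^-1 * x2^-1) x2 x3)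
  (fun x0 x1 x2 x3 : gT => mk4 x0 (x1 * x2 * x3) x2 x3) (fun _ _ _ _ : gT => 1 : gT).
Qed.

Lemma sols4_1302 : sols4 o1 o3 o0 o2 = sols4 o3 o2 o1 o0.
Proof.
sols4_by_subst (fun x0 x1 x2 x3 : gT => mk4 (x1 * x0) x1 x2 (x3 * x2))
  (fun x0 x1 x2 x3 : gT => mk4 (x1^-1 * x0) x1 x2 (x3 * x2^-1))
  (fun x0 x1 x2 x3 : gT => x1^-1).
Qed.

Lemma sols4_2103 : sols4 o2 o1 o0 o3 = sols4 o1 o0 o2 o3.
Proof.
sols4_by_subst (fun x0 x1 x2 x3 : gT => mk4 (x0 * x1^-1 * x2) (x2^-1 * x1) x2 x3)
  (fun x0 x1 x2 x3 : gT => mk4 (x0 * x1) (x2 * x1) x2 x3) (fun _ _ _ _ : gT => 1 : gT).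
Qed.

Lemma sols4_2301 : sols4 o2 o3 o0 o1 = sols4 o1 o0 o2 o3.
Proof.
sols4_by_subst (fun x0 x1 x2 x3 : gT => mk4 (x0 * x2^-1) x2 (x1 * x3^-1) x3)
  (fun x0 x1 x2 x3 : gT => mk4 (x0 * x1) (x2 * x3) x1 x3) (fun _ _ _ _ : gT => 1 : gT).
Qed.

Lemma sols4_2310 : sols4 o2 o3 o1 o0 = sols4 o1 o0 o2 o3.
Proof.
sols4_by_subst
  (fun x0 x1 x2 x3 : gT => mk4 (x0 * x1^-1 * x2 * x3) (x3^-1 * x2^-1 * x1) x2 x3)
  (fun x0 x1 x2 x3 : gT => mk4 (x0 * x1) (x2 * x3 * x1) x2 x3) (fun _ _ _ _ : gT => 1 : gT).
Qed.

Lemma sols4_3102 : sols4 o3 o1 o0 o2 = sols4 o3 o2 o1 o0.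
Proof.
sols4_by_subst (fun x0 x1 x2 x3 : gT => mk4 x0 x1 x2 (x3 * x2))
  (fun x0 x1 x2 x3 : gT => mk4 x0 x1 x2 (x3 * x2^-1)) (fun _ _ _ _ : gT => 1 : gT).
Qed.

Lemma sols4_3120 : sols4 o3 o1 o2 o0 = sols4 o1 o0 o2 o3.
Proof.
sols4_by_subst (fun x0 x1 x2 x3 : gT => mk4 (x0 * x3) (x3^-1 * x1 * x2^-1) x2 x3)
  (fun x0 x1 x2 x3 : gT => mk4 (x0 * x3^-1) (x3 * x1 * x2) x2 x3) (fun _ _ _ _ : gT => 1 : gT).
Qed.

Definition sols4_class (n : nat) : Prop :=
  [\/ n = sols4 o0 o1 o2 o3, n = sols4 o1 o0 o2 o3 | n = sols4 o3 o2 o1 o0].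

Lemma sols4_class_rev i j k l :
  sols4_class (sols4 (rev4 l) (rev4 k) (rev4 j) (rev4 i)) -> sols4_class (sols4 i j k l).
Proof. by rewrite -sols4_rev. Qed.

(* pi |-> pi^-1 and pi |-> rev4 pi rev4 generate a Klein four-group acting on 'S_4
   with 13 orbits; the ten lemmas above treat one member of each orbit other than
   those of 1, (1 2) and rev4. *)
Ltac sols4_class_base :=
  rewrite ?sols4_0213 ?sols4_1032 ?sols4_1203 ?sols4_1230 ?sols4_1302 ?sols4_2103
          ?sols4_2301 ?sols4_2310 ?sols4_3102 ?sols4_3120;
  first [by constructor 1 | by constructor 2 | by constructor 3].

Lemma sols4_perm (pi : 'S_4) : sols4_class (sols4 (pi o0) (pi o1) (pi o2) (pi o3)).
Proof.
have uniq_pi : uniq [:: pi o0; pi o1; pi o2; pi o3].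
  by rewrite (map_inj_uniq (@perm_inj _ pi) [:: o0; o1; o2; o3]).
case: rev4E => r0 r1 r2 r3.
move: (sols4_inv pi) (permK pi o0) (permK pi o1) (permK pi o2) (permK pi o3) uniq_pi.
case: (ord4P (pi o0)) => ->; case: (ord4P (pi o1)) => ->;
case: (ord4P (pi o2)) => ->; case: (ord4P (pi o3)) => -> //= inv p0 p1 p2 p3 _;
rewrite {}p0 {}p1 {}p2 {}p3 in inv;
first [ sols4_class_base
      | rewrite inv; sols4_class_base
      | apply: sols4_class_rev; rewrite r0 r1 r2 r3; sols4_class_base
      | rewrite inv; apply: sols4_class_rev; rewrite r0 r1 r2 r3; sols4_class_base ].
Qed.

Lemma Pr4_perm (pi : 'S_4) :
  [\/ Pr gT pi = Pr gT (1 : 'S_4), Pr gT pi = Pr gT (tperm o0 o1) | Pr gT pi = Pr4 gT].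
Proof.
rewrite /Pr4 !Pr_sols4 !perm1 tpermL tpermR !tpermD //; case: rev4E => -> -> -> ->.
by case: (sols4_perm pi) => ->; [constructor 1 | constructor 2 | constructor 3].
Qed.

Lemma Pr_tperm01 : Pr gT (tperm o0 o1) = commProb gT.
Proof.
have gT_neq0 : (#|gT|%:R != 0 :> rat)%R by rewrite pnatr_eq0 -lt0n; apply/card_gt0P; exists 1.
rewrite Pr_sols4 tpermL tpermR !tpermD // sols4_swap /commProb natrM !natrX.
by rewrite (exprS _ 3) invfM mulrACA divff ?mulr1 // expf_neq0.
Qed.

End FourLetters.

Theorem mainTheorem10 (gT : finGroupType) (q : rat) :
  Spec gT 4 q <-> [\/ q = 1%R, q = commProb gT | q = Pr4 gT].
Proof.
rewrite -(Pr_perm1 gT 4) -Pr_tperm01.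
split => [[pi <-]|]; first exact: Pr4_perm.
by case=> ->; [exists 1%g | exists (tperm o0 o1) | exists rev4].
Qed.
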